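(* Let $X$ be a finite topological space and $A\subseteq X$. Then $rad_X(A)\le rad_X(A^\circ)$ and $rad_X(A)\le rad_X(\overline{A})$, where $A^\circ$ and $\overline{A}$ are the interior and closure of $A$ in $X$.
   Context: For a finite topological space $X$ and $x\in X$, $U_x$ denotes the minimal open set containing $x$. A nested sequence of open sets around $x$ is a finite sequence $U_0\subsetneq U_1\subsetneq\cdots\subsetneq U_m=X$ of open sets with $U_0=U_x$ such that for each $j$ there is no open set $V$ with $U_j\subsetneq V\subsetneq U_{j+1}$. The furtherness function $\Psi:X\times X\to\{0,1,\dots,|X|-1\}$ is defined by: $\Psi(x,y)$ is the smallest integer $k\ge 0$ such that there exists a nested sequence $(U_j)_{j\ge0}$ of open sets around $x$ with $y\in U_k$. For $a\in X$ and $B\subseteq X$, $\Psi(a,B)=\min_{b\in B}\Psi(a,b)$, and for $A,B\subseteq X$, $\Psi(A,B)=\min_{a\in A}\Psi(a,B)$, with the value $\infty$ (larger than every integer) if $A$ or $B$ is empty. $\partial_X(A)$ denotes the boundary of $A$ in $X$. The center of $A$ is $Cent_X(A)=\{a\in A\mid \Psi(a,\partial_X(A))\ge\Psi(b,\partial_X(A))\ \forall b\in A\}$, and the radius is $rad_X(A)=\Psi(Cent_X(A),\partial_X(A))$. *)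

From mathcomp Require Import all_boot.
From mathcomp Require Import boolp.

Set Implicit Arguments.
Unset Strict Implicit.
Unset Printing Implicit Defensive.

Section FiniteSpaces.
Variable T : finType.

(* Since T is finite, closure under binary unions/intersections is the same
   as closure under arbitrary unions and finite intersections. *)
Definition is_topology (op : {set {set T}}) : Prop :=
  [/\ set0 \in op, [set: T] \in op,
      (forall U V, U \in op -> V \in op -> U :|: V \in op) &
      (forall U V, U \in op -> V \in op -> U :&: V \in op)].

Variable op : {set {set T}}.

Definition interiorT (A : {set T}) : {set T} :=
  \bigcup_(U in op | U \subset A) U.

Definition closureT (A : {set T}) : {set T} :=
  \bigcap_(F : {set T} | (~: F \in op) && (A \subset F)) F.

Definition boundary (A : {set T}) : {set T} := closureT A :\: interiorT A.

Definition minopen (x : T) : {set T} := \bigcap_(U in op | x \in U) U.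

Definition covers (U V : {set T}) : bool :=
  (U \proper V) && [forall W : {set T}, (W \in op) ==> ~~ ((U \proper W) && (W \proper V))].

Definition nested_seq (x : T) (s : seq {set T}) : bool :=
  match s with
  | [::] => false
  | U0 :: t => [&& U0 == minopen x, all (fun U => U \in op) s,
                   path covers U0 t & last U0 t == [set: T]]
  end.

Definition reach (x y : T) (k : nat) : Prop :=
  exists s, nested_seq x s /\ y \in nth set0 s k.

(* Psi x y : the least such k (the existence is a fact about finite spaces;
   the fallback value 0 is never used when op is a topology). *)
Definition Psi (x y : T) : nat :=
  match pselect (exists k, reach x y k) with
  | left H =>
      @ex_minn (fun k => `[< reach x y k >])
        (let: ex_intro k Hk := H in ex_intro _ k (asboolT Hk))
  | right _ => 0
  end.

End FiniteSpaces.

(* Natural numbers extended with infinity: None = ∞ (larger than every integer). *)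
Definition leI (a b : option nat) : bool :=
  match a, b with
  | _, None => true
  | None, Some _ => false
  | Some m, Some n => m <= n
  end.

Definition minI (a b : option nat) : option nat :=
  match a, b with
  | None, _ => b
  | _, None => a
  | Some m, Some n => Some (minn m n)
  end.

Section Radius.
Variables (T : finType) (op : {set {set T}}).

Definition PsiPS (a : T) (B : {set T}) : option nat :=
  \big[minI/None]_(b in B) Some (Psi op a b).

Definition PsiSS (A B : {set T}) : option nat :=
  \big[minI/None]_(a in A) PsiPS a B.

Definition center (A : {set T}) : {set T} :=
  [set a in A | [forall b in A,
     leI (PsiPS b (boundary op A)) (PsiPS a (boundary op A))]].

Definition radius (A : {set T}) : option nat :=
  PsiSS (center A) (boundary op A).

End Radius.

From mathcomp Require Import all_boot.
From mathcomp Require Import boolp.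
From HB Require Import structures.

Set Implicit Arguments.
Unset Strict Implicit.
Unset Printing Implicit Defensive.

(* Both B = interior A and B = closure A satisfy  ∂B ⊆ ∂A  and  A ⊆ ∂A ∪ B.
   Take a center a of A.  If a ∈ ∂A then rad A ≤ Ψ(a, ∂A) = 0.  Otherwise
   a ∈ B, and Ψ(a, ∂A) ≤ Ψ(a, ∂B) ≤ Ψ(c, ∂B) for every center c of B: the
   first inequality because ∂B is the smaller set, the second because c
   maximises Ψ(·, ∂B) on B. *)

Lemma minIA : associative minI.
Proof. by case=> [a|] [b|] [c|] //=; rewrite minnA. Qed.

Lemma minIC : commutative minI.
Proof. by case=> [a|] [b|] //=; rewrite minnC. Qed.

Lemma min0I : left_id None minI.
Proof. by case. Qed.

HB.instance Definition _ :=
  Monoid.isComLaw.Build (option nat) None minI minIA minIC min0I.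

Lemma leIx0 x : leI x None.
Proof. by case: x. Qed.

Lemma le0I x : leI (Some 0) x.
Proof. by case: x. Qed.

Lemma leI_trans a b c : leI a b -> leI b c -> leI a c.
Proof. by case: a b c => [a|] [b|] [c|] //=; apply: leq_trans. Qed.

Section BigMinI.
Variables (T : finType) (F : T -> option nat).

Lemma bigminI_le (B : {set T}) b : b \in B -> leI (\big[minI/None]_(i in B) F i) (F b).
Proof.
move=> bB; rewrite (bigD1 b) //=.
by case: (F b) (\big[minI/None]_(i in B | i != b) F i) => [m|] [n|] //=; rewrite geq_minl.
Qed.

Lemma bigminI_ge (B : {set T}) x :
  (forall b, b \in B -> leI x (F b)) -> leI x (\big[minI/None]_(i in B) F i).
Proof.
move=> Hx; apply: (big_ind (leI x)) => //; first exact: leIx0.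
by case: x {Hx} => [x|] [a|] [b|] //=; rewrite leq_min => -> ->.
Qed.

Lemma exists_leI_max (A : {set T}) a0 :
  a0 \in A -> exists2 a, a \in A & forall b, b \in A -> leI (F b) (F a).
Proof.
move=> a0A; case: (pickP [pred a in A | F a == None]) => [a /andP[aA /eqP Fa] | noInf].
  by exists a => // b _; rewrite Fa leIx0.
have finite_in_A b : b \in A -> exists n, F b = Some n.
  by move=> bA; case Fb: (F b) => [n|]; [exists n | have := noInf b; rewrite /= bA Fb].
have [a aA amax] := arg_maxnP (fun a => odflt 0 (F a)) a0A.
exists a => // b bA; have := amax b bA.
by have [m ->] := finite_in_A a aA; have [n ->] := finite_in_A b bA.
Qed.

End BigMinI.

Section FiniteTopology.
Variables (T : finType) (op : {set {set T}}).
Hypothesis Hop : is_topology op.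

Lemma interior_sub (A : {set T}) : interiorT op A \subset A.
Proof. by apply/bigcupsP => U /andP[]. Qed.

Lemma subset_closure (A : {set T}) : A \subset closureT op A.
Proof. by apply/bigcapsP => U /andP[]. Qed.

Lemma interior_sub_closure (A : {set T}) : interiorT op A \subset closureT op A.
Proof. exact: subset_trans (interior_sub A) (subset_closure A). Qed.

Lemma interior_max (A U : {set T}) :
  U \in op -> U \subset A -> U \subset interiorT op A.
Proof. by move=> Uop UA; apply: (bigcup_sup U); rewrite Uop UA. Qed.

Lemma closure_min (A F : {set T}) :
  ~: F \in op -> A \subset F -> closureT op A \subset F.
Proof. by move=> Fcl AF; apply: (bigcap_inf F); rewrite Fcl AF. Qed.

Lemma interior_open (A : {set T}) : interiorT op A \in op.
Proof.
case: Hop => op0 _ opU _.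
by apply: (big_ind (fun U => U \in op)) => // U /andP[].
Qed.

Lemma closure_closed (A : {set T}) : ~: closureT op A \in op.
Proof.
case: Hop => op0 _ opU _.
apply: (big_ind (fun F => ~: F \in op)); first by rewrite setCT.
  by move=> F G FG GF; rewrite setCI opU.
by move=> F /andP[].
Qed.

Lemma interiorK (A : {set T}) : interiorT op (interiorT op A) = interiorT op A.
Proof. by apply/eqP; rewrite eqEsubset interior_sub interior_max ?interior_open. Qed.

Lemma closureK (A : {set T}) : closureT op (closureT op A) = closureT op A.
Proof. by apply/eqP; rewrite eqEsubset subset_closure closure_min ?closure_closed. Qed.

Lemma boundary_set0 : boundary op set0 = set0.
Proof.
apply/eqP; rewrite -subset0; apply: subset_trans (subsetDl _ _) _.
by apply: closure_min => //; rewrite setC0; case: Hop.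
Qed.

Lemma boundary_interior_sub (A : {set T}) :
  boundary op (interiorT op A) \subset boundary op A.
Proof.
rewrite /boundary interiorK; apply: setSD.
exact: closure_min (closure_closed A) (interior_sub_closure A).
Qed.

Lemma boundary_closure_sub (A : {set T}) :
  boundary op (closureT op A) \subset boundary op A.
Proof.
by rewrite /boundary closureK; apply/setDS/interior_max;
  [exact: interior_open | exact: interior_sub_closure].
Qed.

Lemma sub_boundaryU_interior (A : {set T}) :
  A \subset boundary op A :|: interiorT op A.
Proof.
apply/subsetP => a aA; rewrite !inE.
by case: (a \in interiorT op A); rewrite ?orbT //= (subsetP (subset_closure A)).
Qed.

End FiniteTopology.

Section Radius.
Variables (T : finType) (op : {set {set T}}).
Hypothesis Hop : is_topology op.

(* The junk value 0 of [Psi] makes this hold even when no nested sequence exists. *)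
Lemma Psi_refl a : Psi op a a = 0.
Proof.
rewrite /Psi; case: pselect => // reach_ex.
case: ex_minnP => m /asboolP [s [nested_s _]] m_min; apply/eqP; rewrite -leqn0.
apply: m_min; apply/asboolP; exists s; split => //.
case: s nested_s => // U0 t /and4P[/eqP -> _ _ _] /=.
by apply/bigcapP => U /andP[].
Qed.

Lemma PsiPS_mem a (B : {set T}) : a \in B -> PsiPS op a B = Some 0.
Proof.
move=> aB; have := bigminI_le (fun b => Some (Psi op a b)) aB.
by rewrite Psi_refl /PsiPS; case: (\big[minI/None]_(b in B) _) => // [[]].
Qed.

Lemma PsiPS_sub a (B C : {set T}) : B \subset C -> leI (PsiPS op a C) (PsiPS op a B).
Proof. by move=> BC; apply: bigminI_ge => b bB; apply: bigminI_le; apply: (subsetP BC). Qed.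

Lemma center_sub (A : {set T}) : center op A \subset A.
Proof. by apply/subsetP => a; rewrite inE => /andP[]. Qed.

Lemma center_max (A : {set T}) a b : a \in center op A -> b \in A ->
  leI (PsiPS op b (boundary op A)) (PsiPS op a (boundary op A)).
Proof. by rewrite inE => /andP[_ /forallP amax] bA; have := amax b; rewrite bA. Qed.

Lemma center_nonempty (A : {set T}) a0 : a0 \in A -> exists a, a \in center op A.
Proof.
move=> a0A; have [a aA amax] := exists_leI_max (fun a => PsiPS op a (boundary op A)) a0A.
by exists a; rewrite inE aA; apply/forallP => b; apply/implyP; apply: amax.
Qed.

Lemma radius_le_center (A : {set T}) a :
  a \in center op A -> leI (radius op A) (PsiPS op a (boundary op A)).
Proof. exact: bigminI_le. Qed.

Lemma radius_boundary0 (A : {set T}) : boundary op A = set0 -> radius op A = None.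
Proof.
move=> bd0; rewrite /radius /PsiSS bd0 big1 // => c _.
by rewrite /PsiPS big_set0.
Qed.

Lemma radius_le (A B : {set T}) :
  boundary op B \subset boundary op A -> A \subset boundary op A :|: B ->
  leI (radius op A) (radius op B).
Proof.
move=> bdBA ABU; have [A0 | [a0 a0A]] := set_0Vmem A.
  suff bdB0 : boundary op B = set0 by rewrite (radius_boundary0 bdB0) leIx0.
  by apply/eqP; rewrite -subset0 -(boundary_set0 Hop) -A0.
have [a aC] := center_nonempty a0A; apply: leI_trans (radius_le_center aC) _.
have /setUP [abd | aB] := subsetP ABU a (subsetP (center_sub A) a aC).
  by rewrite PsiPS_mem ?le0I.
apply: leI_trans (PsiPS_sub a bdBA) _.
by apply: bigminI_ge => c cC; apply: center_max.
Qed.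

End Radius.

Theorem mainTheorem20 (T : finType) (op : {set {set T}})
  (Hop : is_topology op) (A : {set T}) :
  leI (radius op A) (radius op (interiorT op A)) /\
  leI (radius op A) (radius op (closureT op A)).
Proof.
have A_sub := sub_boundaryU_interior op A.
split; apply: (radius_le Hop).
- exact: boundary_interior_sub.
- exact: A_sub.
- exact: boundary_closure_sub.
- by apply: subset_trans A_sub _; apply/setUS/interior_sub_closure.
Qed.
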